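(* Let $-3<c<-2$, $k=k(c)$, and put $F_c(z)=D_c(2z)=1+\sum_{n\ge1}\frac{z^n}{r_1(c)\cdots r_n(c)}$ and $M_c(z)=\frac{z^k}{r_1(c)\cdots r_k(c)}$. Then for every $z$ with $4r_k(c)<|z|<9r_k(c)$, $$\left|1-\frac{F_c(z)}{M_c(z)}\right|\le\frac23 .$$
   Context: For real $c<-2$ let $f_c(z)=z^2+c$ and $r_n(c)=f_c^{\circ n}(0)$, so $r_1(c)=c$ and $r_{n+1}(c)=r_n(c)^2+c$; $D_c(\lambda)=1+\sum_{n=1}^{\infty}\frac{\lambda^n}{2^n r_1(c)\cdots r_n(c)}$. For $-3<c<-2$, $k(c)$ denotes the smallest positive integer $k$ such that $r_{k+1}(c)/r_k(c)\ge 36$. *)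

From Stdlib Require Import Reals Lra.
Open Scope R_scope.

(* r n c = f_c^{n}(0): r 0 = 0, r (n+1) = (r n)^2 + c, so r 1 = c. *)
Fixpoint r (n : nat) (c : R) : R :=
  match n with
  | O => 0
  | S m => (r m c) ^ 2 + c
  end.

Fixpoint rprod (n : nat) (c : R) : R :=
  match n with
  | O => 1
  | S m => rprod m c * r (S m) c
  end.

Definition is_k (c : R) (k : nat) : Prop :=
  (1 <= k)%nat /\ r (S k) c / r k c >= 36 /\
  (forall j : nat, (1 <= j)%nat -> (j < k)%nat -> r (S j) c / r j c < 36).

Definition Cx : Type := (R * R)%type.
Definition Cre (z : Cx) : R := fst z.
Definition Cim (z : Cx) : R := snd z.
Definition RtoC (x : R) : Cx := (x, 0).
Definition Cadd (z w : Cx) : Cx := (Cre z + Cre w, Cim z + Cim w).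
Definition Csub (z w : Cx) : Cx := (Cre z - Cre w, Cim z - Cim w).
Definition Cmul (z w : Cx) : Cx :=
  (Cre z * Cre w - Cim z * Cim w, Cre z * Cim w + Cim z * Cre w).
Definition Cmod (z : Cx) : R := sqrt (Cre z ^ 2 + Cim z ^ 2).
Definition Cinv (z : Cx) : Cx :=
  (Cre z / (Cre z ^ 2 + Cim z ^ 2), - Cim z / (Cre z ^ 2 + Cim z ^ 2)).
Definition Cdiv (z w : Cx) : Cx := Cmul z (Cinv w).
Fixpoint Cpow (z : Cx) (n : nat) : Cx :=
  match n with
  | O => RtoC 1
  | S m => Cmul (Cpow z m) z
  end.

Definition Ccv (u : nat -> Cx) (l : Cx) : Prop :=
  forall eps : R, eps > 0 -> exists N : nat, forall n : nat, (n >= N)%nat ->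
    Cmod (Csub (u n) l) < eps.

Definition Fterm (c : R) (z : Cx) (n : nat) : Cx :=
  Cdiv (Cpow z n) (RtoC (rprod n c)).

Fixpoint Fpartial (c : R) (z : Cx) (N : nat) : Cx :=
  match N with
  | O => RtoC 1
  | S m => Cadd (Fpartial c z m) (Fterm c z (S m))
  end.

Definition Mc (c : R) (k : nat) (z : Cx) : Cx := Fterm c z k.

(* The n-th term of the series has modulus t_n = |z|^n / |r_1 ... r_n|, so
   t_(n+1) / t_n = |z| / |r_(n+1)|.  Up to the index k every |r_j| is at most
   r_k < |z| / 4, while beyond it r_(n+1) >= r_(k+1) >= 36 r_k > 4 |z|, the orbit
   being increasing from r_2 on.  So the moduli grow at least fourfold up to the
   peak term M_c(z) (index k) and shrink at least fourfold after it: the series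
   converges and |F_c(z) - M_c(z)| <= 2 t_k (1/4 + 1/16 + ...) = 2/3 |M_c(z)|. *)

From Pilot Require Import Defs.
From Stdlib Require Import Reals Lra Lia.
From Coquelicot Require Import Coquelicot.
(* Coquelicot also defines [Cmod], [Cpow], [RtoC], [Cinv] and [Cdiv]; unqualified
   names below refer to those of Defs. *)
Import Defs.
Open Scope R_scope.

Section PeakedSum.

Variables (a : nat -> R) (k : nat).
Hypothesis a_ge0 : forall n, 0 <= a n.
Hypothesis a_rise : forall n, (n < k)%nat -> 4 * a n <= a (S n).
Hypothesis a_fall : forall n, (k <= n)%nat -> 4 * a (S n) <= a n.

Lemma sum_n_le_before_peak j : (j <= k)%nat -> sum_n a j <= 4 / 3 * a j.
Proof.
  induction j as [|j IH]; intros Hj.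
  - rewrite sum_O. pose proof (a_ge0 0). lra.
  - rewrite sum_Sn. change plus with Rplus.
    specialize (IH ltac:(lia)). pose proof (a_rise j ltac:(lia)). lra.
Qed.

Lemma sum_n_le_after_peak N : (k <= N)%nat -> sum_n a N + a N / 3 <= 5 / 3 * a k.
Proof.
  induction 1 as [|N HN IH].
  - pose proof (sum_n_le_before_peak k (le_n k)). lra.
  - rewrite sum_Sn. change plus with Rplus.
    pose proof (a_fall N HN). lra.
Qed.

Lemma ex_series_peaked : ex_series a.
Proof.
  assert (Hlim : ex_finite_lim_seq (fun N => sum_n a (N + k))).
  { apply (ex_finite_lim_seq_incr _ (5 / 3 * a k)).
    - intros N. rewrite Nat.add_succ_l, sum_Sn. change plus with Rplus.
      pose proof (a_ge0 (S (N + k))). lra.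
    - intros N. pose proof (sum_n_le_after_peak (N + k) ltac:(lia)).
      pose proof (a_ge0 (N + k)). lra. }
  destruct Hlim as [l Hl]. exists l.
  exact (proj2 (is_lim_seq_incr_n (sum_n a) k l) Hl).
Qed.

End PeakedSum.

Lemma minus_plus_r {G : AbelianGroup} (x y : G) : minus (plus x y) y = x.
Proof.
  unfold minus. rewrite <- (@plus_assoc (AbelianGroup.AbelianMonoid G)), plus_opp_r.
  apply plus_zero_r.
Qed.

Lemma minus_plus_l {G : AbelianGroup} (x y z : G) : minus (plus x y) z = plus (minus x z) y.
Proof.
  unfold minus. rewrite <- !(@plus_assoc (AbelianGroup.AbelianMonoid G)), (plus_comm y).
  reflexivity.
Qed.

Section NormedSeries.

Context {K : AbsRing} {V : NormedModule K}.

Lemma norm_sum_n_minus_le (u : nat -> V) k N : (k <= N)%nat ->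
  norm (minus (sum_n u N) (u k)) <= sum_n (fun n => norm (u n)) N - norm (u k).
Proof.
  induction 1 as [|N HN IH].
  - destruct k as [|k].
    + assert (H0 : norm (minus (u 0%nat) (u 0%nat)) = 0)
        by (rewrite minus_eq_zero; exact norm_zero).
      rewrite !sum_O, H0. lra.
    + rewrite !sum_Sn. change (plus (sum_n (fun n => norm (u n)) k) (norm (u (S k))))
        with (sum_n (fun n => norm (u n)) k + norm (u (S k))).
      rewrite (@minus_plus_r (NormedModule.AbelianGroup K V)).
      pose proof (norm_sum_n_m u 0 k). unfold sum_n. lra.
  - rewrite !sum_Sn. change (plus (sum_n (fun n => norm (u n)) N) (norm (u (S N))))
      with (sum_n (fun n => norm (u n)) N + norm (u (S N))).
    rewrite (@minus_plus_l (NormedModule.AbelianGroup K V)).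
    eapply Rle_trans; [apply norm_triangle|]. lra.
Qed.

Lemma norm_minus_lim_le (f : nat -> V) (l w : V) (b : R) :
  filterlim f eventually (locally l) ->
  eventually (fun n => norm (minus (f n) w) <= b) -> norm (minus l w) <= b.
Proof.
  intros Hf Hb. apply Rnot_lt_le. intros Hlt.
  assert (Heps : 0 < norm (minus l w) - b) by lra.
  pose proof (proj1 (filterlim_locally_ball_norm f l) Hf (mkposreal _ Heps)) as Hball.
  destruct (filter_and _ _ Hball Hb) as [N HN].
  destruct (HN N (le_n N)) as [HlN HNw]. unfold ball_norm in HlN. simpl in HlN.
  assert (Htri : norm (minus l w) <= norm (minus l (f N)) + norm (minus (f N) w)).
  { rewrite (minus_trans (f N)). apply norm_triangle. }
  assert (Hsym : norm (minus l (f N)) = norm (minus (f N) l)).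
  { rewrite <- opp_minus. apply norm_opp. }
  lra.
Qed.

Lemma norm_series_minus_peak_le (u : nat -> V) (l : V) k :
  (forall n, (n < k)%nat -> 4 * norm (u n) <= norm (u (S n))) ->
  (forall n, (k <= n)%nat -> 4 * norm (u (S n)) <= norm (u n)) ->
  is_series u l -> norm (minus l (u k)) <= 2 / 3 * norm (u k).
Proof.
  intros Hrise Hfall Hu. apply (norm_minus_lim_le _ _ _ _ Hu).
  exists k. intros N HN.
  pose proof (norm_sum_n_minus_le u k N HN).
  pose proof (sum_n_le_after_peak (fun n => norm (u n)) k (fun n => norm_ge_0 _)
    Hrise Hfall N HN).
  pose proof (norm_ge_0 (u N)). lra.
Qed.

End NormedSeries.

Section Dynamics.

Variable c : R.
Hypothesis Hc : -3 < c < -2.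

Lemma r_invariant n : (2 <= n)%nat -> 2 <= r n c /\ 0 < r n c ^ 2 - r n c + c.
Proof.
  induction 1 as [|n _ [IH1 IH2]]; simpl in *.
  (* r_2^2 - r_2 + c = c^3 (c + 2), and t^2 - t increases for t >= 1/2. *)
  - assert (c ^ 3 * (c + 2) > 0) by (assert (c ^ 3 < 0) by (simpl; nra); nra).
    split; nra.
  - set (x := r n c) in *. assert (x * (x * 1) + c > x) by nra. split; nra.
Qed.

Lemma r_lt_succ n : (2 <= n)%nat -> r n c < r (S n) c.
Proof. intros Hn. destruct (r_invariant n Hn). simpl. lra. Qed.

Lemma r_le_mono i j : (2 <= i)%nat -> (i <= j)%nat -> r i c <= r j c.
Proof.
  intros Hi. induction 1 as [|j Hij IH]; [lra|].
  pose proof (r_lt_succ j ltac:(lia)). lra.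
Qed.

Lemma r_neq0 n : (1 <= n)%nat -> r n c <> 0.
Proof.
  intros Hn. destruct n as [|[|n]]; [lia| simpl; lra |].
  pose proof (r_invariant (S (S n)) ltac:(lia)). lra.
Qed.

Lemma rprod_neq0 n : rprod n c <> 0.
Proof.
  induction n as [|n IH]; [simpl; lra|].
  apply Rmult_integral_contrapositive_currified; [exact IH|].
  apply r_neq0. lia.
Qed.

Lemma is_k_ge2 k : is_k c k -> (2 <= k)%nat.
Proof.
  intros [Hk1 [Hk2 _]]. destruct k as [|[|k]]; [lia | exfalso | lia].
  destruct (r_invariant 2 (le_n 2)) as [Hr2 _].
  assert (r 2 c / r 1 c < 0) by (apply Rdiv_pos_neg; simpl in *; lra). lra.
Qed.

Lemma is_k_jump k : is_k c k -> 36 * r k c <= r (S k) c.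
Proof.
  intros Hk. pose proof (is_k_ge2 k Hk) as H2. destruct Hk as [_ [Hratio _]].
  destruct (r_invariant k H2) as [Hr _].
  apply Rge_le in Hratio.
  apply (Rmult_le_compat_r (r k c)) in Hratio; [|lra].
  unfold Rdiv in Hratio. rewrite Rmult_assoc, Rinv_l in Hratio by lra. lra.
Qed.

Lemma is_k_gt36 k : is_k c k -> 36 < r k c.
Proof.
  intros Hk. pose proof (is_k_jump k Hk).
  destruct (r_invariant k (is_k_ge2 k Hk)). simpl in *. nra.
Qed.

Lemma Rabs_r_le_peak k i : is_k c k -> (1 <= i <= k)%nat -> Rabs (r i c) <= r k c.
Proof.
  intros Hk Hi. pose proof (is_k_gt36 k Hk).
  destruct i as [|[|i]]; [lia| |].
  - simpl. rewrite Rabs_left by lra. lra.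
  - destruct (r_invariant (S (S i)) ltac:(lia)).
    rewrite Rabs_right by lra. apply r_le_mono; lia.
Qed.

Lemma r_succ_ge_jump k n : is_k c k -> (k <= n)%nat -> 36 * r k c <= r (S n) c.
Proof.
  intros Hk Hn. pose proof (is_k_jump k Hk).
  pose proof (r_le_mono (S k) (S n) ltac:(pose proof (is_k_ge2 k Hk); lia) ltac:(lia)).
  lra.
Qed.

End Dynamics.

Lemma Cpow_Complex (z : Cx) n : Cpow z n = Complex.Cpow z n.
Proof.
  induction n as [|n IH]; [reflexivity|].
  change (Cmult (Cpow z n) z = Cmult z (Complex.Cpow z n)).
  rewrite IH. apply Cmult_comm.
Qed.

Lemma Fterm_0 c z : Fterm c z 0 = RtoC 1.
Proof.
  unfold Fterm, Cdiv, Cmul, Cinv, RtoC, Cre, Cim. simpl. f_equal; field.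
Qed.

Lemma Fpartial_sum_n c z N : Fpartial c z N = sum_n (Fterm c z : nat -> C) N.
Proof.
  induction N as [|N IH].
  - rewrite sum_O, Fterm_0. reflexivity.
  - rewrite sum_Sn, <- IH. reflexivity.
Qed.

Section Terms.

Variables (c : R) (z : Cx).
Hypothesis Hc : -3 < c < -2.

Lemma Cmod_Fterm n : Cmod (Fterm c z n) = Cmod z ^ n / Rabs (rprod n c).
Proof.
  change (Complex.Cmod (Cpow z n / Complex.RtoC (rprod n c))%C
    = Complex.Cmod z ^ n / Rabs (rprod n c)).
  rewrite Cmod_div, Cpow_Complex, Cmod_pow, Cmod_R; [reflexivity|].
  intros H. apply (rprod_neq0 c Hc n). now injection H.
Qed.

Lemma Cmod_Fterm_succ n :
  Cmod (Fterm c z (S n)) * Rabs (r (S n) c) = Cmod (Fterm c z n) * Cmod z.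
Proof.
  rewrite !Cmod_Fterm. change (rprod (S n) c) with (rprod n c * r (S n) c).
  rewrite Rabs_mult.
  pose proof (Rabs_pos_lt _ (rprod_neq0 c Hc n)).
  pose proof (Rabs_pos_lt _ (r_neq0 c Hc (S n) ltac:(lia))).
  rewrite <- tech_pow_Rmult. field. lra.
Qed.

Lemma Cmod_Fterm_rise k : is_k c k -> 4 * r k c < Cmod z ->
  forall n, (n < k)%nat -> 4 * Cmod (Fterm c z n) <= Cmod (Fterm c z (S n)).
Proof.
  intros Hk Hz n Hn.
  pose proof (Cmod_Fterm_succ n).
  pose proof (Rabs_r_le_peak c Hc k (S n) Hk ltac:(lia)).
  pose proof (Rabs_pos_lt _ (r_neq0 c Hc (S n) ltac:(lia))).
  assert (0 <= Cmod (Fterm c z n) * (Cmod z - 4 * Rabs (r (S n) c)))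
    by (apply Rmult_le_pos; [apply Cmod_ge_0 | lra]).
  nra.
Qed.

Lemma Cmod_Fterm_fall k : is_k c k -> Cmod z < 9 * r k c ->
  forall n, (k <= n)%nat -> 4 * Cmod (Fterm c z (S n)) <= Cmod (Fterm c z n).
Proof.
  intros Hk Hz n Hn.
  pose proof (Cmod_Fterm_succ n).
  pose proof (r_succ_ge_jump c Hc k n Hk Hn). pose proof (is_k_gt36 c Hc k Hk).
  rewrite Rabs_right in * by lra.
  assert (0 <= Cmod (Fterm c z n) * (r (S n) c - 4 * Cmod z))
    by (apply Rmult_le_pos; [apply Cmod_ge_0 | lra]).
  nra.
Qed.

Lemma Cmod_Fterm_pos n : 0 < Cmod z -> 0 < Cmod (Fterm c z n).
Proof.
  intros Hz. rewrite Cmod_Fterm.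
  apply Rdiv_lt_0_compat; [apply pow_lt, Hz | apply Rabs_pos_lt, rprod_neq0, Hc].
Qed.

End Terms.

Lemma Ccv_of_filterlim (u : nat -> C) (l : C) : filterlim u eventually (locally l) -> Ccv u l.
Proof.
  intros Hu eps Heps.
  exact (proj1 (filterlim_locally_ball_norm u l) Hu (mkposreal eps Heps)).
Qed.

Lemma Cmod_one_minus_div_le (F M : Cx) (b : R) : 0 < Cmod M ->
  Cmod (Csub F M) <= b * Cmod M -> Cmod (Csub (RtoC 1) (Cdiv F M)) <= b.
Proof.
  intros HM HFM.
  assert (HM0 : M <> Complex.RtoC 0).
  { intros E. rewrite E in HM. change (0 < Complex.Cmod (Complex.RtoC 0)) in HM.
    rewrite Cmod_0 in HM. lra. }
  change (Complex.Cmod (1 - F / M)%C <= b).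
  replace (1 - F / M)%C with (- ((F - M) / M))%C by (field; exact HM0).
  rewrite Cmod_opp, Cmod_div by exact HM0.
  apply Rle_div_l; [exact HM | exact HFM].
Qed.

Theorem mainTheorem7 (c : R) (k : nat) (z : Cx) :
  -3 < c < -2 ->
  is_k c k ->
  4 * r k c < Cmod z < 9 * r k c ->
  exists F : Cx,
    Ccv (Fpartial c z) F /\
    Cmod (Csub (RtoC 1) (Cdiv F (Mc c k z))) <= 2 / 3.
Proof.
  intros Hc Hk Hz.
  pose proof (Cmod_Fterm_rise c z Hc k Hk (proj1 Hz)) as Hrise.
  pose proof (Cmod_Fterm_fall c z Hc k Hk (proj2 Hz)) as Hfall.
  assert (Hsum : ex_series (V := C_NormedModule) (Fterm c z)).
  { apply (ex_series_le (V := C_CompleteNormedModule) _ (fun n => Cmod (Fterm c z n))).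
    { intros n. apply Rle_refl. }
    exact (ex_series_peaked _ k (fun n => Cmod_ge_0 _) Hrise Hfall). }
  destruct Hsum as [F HF]. exists F. split.
  - apply Ccv_of_filterlim. apply (filterlim_ext (sum_n (Fterm c z : nat -> C))); [|exact HF].
    intros N. symmetry. apply Fpartial_sum_n.
  - apply Cmod_one_minus_div_le.
    + apply Cmod_Fterm_pos; [exact Hc|]. pose proof (is_k_gt36 c Hc k Hk). lra.
    + exact (norm_series_minus_peak_le _ F k Hrise Hfall HF).
Qed.
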